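(* Let $n,p$ be positive integers, $X\in\mathbb{R}^{n\times p}$, $\mathbf y\in\mathbb{R}^n$ and $\delta>0$. For any $\mathbf s\in\{0,1\}^p$, the least squares estimate $\widehat{\boldsymbol\beta}_{[\mathbf s]}=(X_{[\mathbf s]}^\top X_{[\mathbf s]})^{-1}X_{[\mathbf s]}^\top\mathbf y$ exists (i.e. $X_{[\mathbf s]}^\top X_{[\mathbf s]}$ is invertible) if and only if $L_{\mathbf s}$ is invertible, and in that case \[ X_{[\mathbf s]}\widehat{\boldsymbol\beta}_{[\mathbf s]}=X_{\mathbf s}\widetilde{\boldsymbol\beta}_{\mathbf s}. \]
   Context: For a binary vector $\mathbf s\in\{0,1\}^p$, $|\mathbf s|=\sum_j s_j$ and $X_{[\mathbf s]}$ is the $n\times|\mathbf s|$ matrix obtained from $X$ by keeping only the columns $j$ with $s_j=1$. For $\mathbf t\in[0,1]^p$, $T_{\mathbf t}=\mathrm{Diag}(t_1,\dots,t_p)$, $X_{\mathbf t}=XT_{\mathbf t}$, $L_{\mathbf t}=\frac1n[X_{\mathbf t}^\top X_{\mathbf t}+\delta(I-T_{\mathbf t}^2)]$ with $I$ the $p\times p$ identity, and $\widetilde{\boldsymbol\beta}_{\mathbf t}:=L_{\mathbf t}^{+}\left(X_{\mathbf t}^\top\mathbf y/n\right)$ with $L_{\mathbf t}^+$ the Moore–Penrose pseudo-inverse. *)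

From HB Require Import structures.
From mathcomp Require Import all_boot all_order all_algebra.
From mathcomp Require Import boolp classical_sets reals.
Set Implicit Arguments. Unset Strict Implicit. Unset Printing Implicit Defensive.
Import Order.TTheory GRing.Theory Num.Theory.
Local Open Scope ring_scope.

Section Defs.
Variable R : realType.

(* The four Penrose conditions (real case: transpose = adjoint). *)
Definition is_MP_inverse m k (A : 'M[R]_(m, k)) (B : 'M[R]_(k, m)) : Prop :=
  [/\ A *m B *m A = A, B *m A *m B = B,
      (A *m B)^T = A *m B & (B *m A)^T = B *m A].

(* Moore--Penrose pseudo-inverse A^+ (it exists and is unique; we pick
   the element satisfying the Penrose conditions). *)
Definition mp_pinv m k (A : 'M[R]_(m, k)) : 'M[R]_(k, m) :=
  xget 0 [set B | is_MP_inverse A B].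

Definition supp_card p (s : 'I_p -> bool) : nat := #|[pred j | s j]|.

(* X_[s]: keep the columns j with s_j = 1 (in increasing order). *)
Definition Xsub n p (X : 'M[R]_(n, p)) (s : 'I_p -> bool)
  : 'M[R]_(n, supp_card s) :=
  colsub (fun k : 'I_(supp_card s) => enum_val k) X.

Definition Tmat p (t : 'I_p -> R) : 'M[R]_p := diag_mx (\row_j t j).

Definition Xt n p (X : 'M[R]_(n, p)) (t : 'I_p -> R) : 'M[R]_(n, p) :=
  X *m Tmat t.

Definition Lt n p (X : 'M[R]_(n, p)) (delta : R) (t : 'I_p -> R) : 'M[R]_p :=
  (n%:R)^-1 *: ((Xt X t)^T *m Xt X t + delta *: (1%:M - Tmat t *m Tmat t)).

Definition beta_tilde n p (X : 'M[R]_(n, p)) (y : 'cV[R]_n) (delta : R)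
  (t : 'I_p -> R) : 'cV[R]_p :=
  mp_pinv (Lt X delta t) *m ((n%:R)^-1 *: ((Xt X t)^T *m y)).

Definition bvec p (s : 'I_p -> bool) : 'I_p -> R := fun j => (s j)%:R.

Definition beta_hat n p (X : 'M[R]_(n, p)) (y : 'cV[R]_n) (s : 'I_p -> bool)
  : 'cV[R]_(supp_card s) :=
  invmx ((Xsub X s)^T *m Xsub X s) *m (Xsub X s)^T *m y.

End Defs.

(** Let [Q] be the [p x |s|] matrix selecting the columns in [s], so that
    [Q^T Q = I], [Q Q^T = T_s], [X_[s] = X Q] and [X_s = X_[s] Q^T].  Writing
    [A = X_[s]^T X_[s]], we get [n L_s = Q A Q^T + delta (I - Q Q^T)]: this
    acts as [A] on the range of [Q] and as [delta] on its orthogonal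
    complement, so it is invertible exactly when [A] is, with inverse
    [Q A^-1 Q^T + delta^-1 (I - Q Q^T)].  An invertible matrix is its own
    Moore--Penrose inverse, and substituting the inverse into
    [X_s L_s^-1 X_s^T y / n] leaves [X_[s] A^-1 X_[s]^T y]. *)

From HB Require Import structures.
From mathcomp Require Import all_boot all_order all_algebra.
From mathcomp Require Import boolp classical_sets reals.
Set Implicit Arguments. Unset Strict Implicit. Unset Printing Implicit Defensive.
Import Order.TTheory GRing.Theory Num.Theory.
Local Open Scope ring_scope.

Section ExtendMx.
Variables (R : comUnitRingType) (m p : nat) (Q : 'M[R]_(p, m)).
Hypothesis trQQ : Q^T *m Q = 1%:M.

Definition extend_mx (A : 'M[R]_m) (d : R) : 'M[R]_p :=
  Q *m A *m Q^T + d *: (1%:M - Q *m Q^T).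

Lemma trQ_mul_compl : Q^T *m (1%:M - Q *m Q^T) = 0.
Proof. by rewrite mulmxBr mulmx1 mulmxA trQQ mul1mx subrr. Qed.

Lemma compl_mulQ : (1%:M - Q *m Q^T) *m Q = 0.
Proof. by rewrite mulmxBl mul1mx -mulmxA trQQ mulmx1 subrr. Qed.

Lemma compl_idem :
  (1%:M - Q *m Q^T) *m (1%:M - Q *m Q^T) = 1%:M - Q *m Q^T.
Proof. by rewrite {1}mulmxBl mul1mx -mulmxA trQ_mul_compl mulmx0 subr0. Qed.

Lemma trQ_mul_extend A d : Q^T *m extend_mx A d = A *m Q^T.
Proof.
by rewrite mulmxDr -scalemxAr trQ_mul_compl scaler0 addr0 !mulmxA trQQ mul1mx.
Qed.

Lemma extend_mxK A d : Q^T *m extend_mx A d *m Q = A.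
Proof. by rewrite trQ_mul_extend -mulmxA trQQ mulmx1. Qed.

Lemma extend_mxM A B c d :
  extend_mx A c *m extend_mx B d = extend_mx (A *m B) (c * d).
Proof.
rewrite /extend_mx mulmxDl !mulmxDr -!scalemxAl -!scalemxAr -!mulmxA.
rewrite (mulmxA Q^T Q) trQQ mul1mx trQ_mul_compl (mulmxA _ Q) compl_mulQ.
by rewrite compl_idem !(mul0mx, mulmx0, scaler0, addr0, add0r) scalerA.
Qed.

Lemma extend_mx1 : extend_mx 1%:M 1 = 1%:M.
Proof. by rewrite /extend_mx mulmx1 scale1r addrC subrK. Qed.

Lemma extend_mxV A d : A \in unitmx -> d \is a GRing.unit ->
  extend_mx A d *m extend_mx (invmx A) d^-1 = 1%:M.
Proof. by move=> Au du; rewrite extend_mxM mulmxV // mulrV // extend_mx1. Qed.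

Lemma unitmx_extend A d : d \is a GRing.unit ->
  (extend_mx A d \in unitmx) = (A \in unitmx).
Proof.
move=> du; apply/idP/idP => [Lu | Au]; last first.
  by case/mulmx1_unit: (extend_mxV Au du).
suff /mulmx1_unit[] : A *m (Q^T *m invmx (extend_mx A d) *m Q) = 1%:M by [].
rewrite !mulmxA -(trQ_mul_extend A d) -(mulmxA _ (extend_mx A d)).
by rewrite mulmxV // mulmx1.
Qed.

Lemma invmx_extend A d : A \in unitmx -> d \is a GRing.unit ->
  invmx (extend_mx A d) = extend_mx (invmx A) d^-1.
Proof.
move=> Au du; have Lu : extend_mx A d \in unitmx by rewrite unitmx_extend.
by rewrite -[RHS]mul1mx -(mulVmx Lu) -mulmxA extend_mxV // mulmx1.
Qed.

End ExtendMx.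

Section Selection.
Variables (R : realType) (n p : nat) (X : 'M[R]_(n, p)) (s : 'I_p -> bool).

Definition sel_mx : 'M[R]_(p, supp_card s) :=
  colsub (fun k : 'I_(supp_card s) => enum_val k) 1%:M.

Lemma Xsub_sel : Xsub X s = X *m sel_mx.
Proof. by rewrite /Xsub /sel_mx mulmx_colsub mulmx1. Qed.

Lemma trsel_mul_sel : sel_mx^T *m sel_mx = 1%:M.
Proof.
apply/matrixP => i j; rewrite !mxE (bigD1 (enum_val i)) //= big1 => [|k ik].
  by rewrite !mxE eqxx mul1r addr0 (inj_eq enum_val_inj).
by rewrite !mxE (negPf ik) mul0r.
Qed.

Lemma sel_mul_trsel : sel_mx *m sel_mx^T = Tmat (bvec R s).
Proof.
apply/matrixP => i j; rewrite !mxE.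
under eq_bigr do rewrite !mxE.
rewrite -(big_enum_val (fun k => (i == k)%:R * (j == k)%:R)) /= big_mkcond.
rewrite (bigD1 i) //= big1 => [|k /negPf ki]; last first.
  by rewrite eq_sym ki mul0r if_same.
by rewrite eqxx mul1r addr0 /bvec eq_sym inE; case: (s i); case: (i == j).
Qed.

Lemma Xt_bvec : Xt X (bvec R s) = Xsub X s *m sel_mx^T.
Proof. by rewrite /Xt -sel_mul_trsel Xsub_sel mulmxA. Qed.

Lemma Lt_bvec delta : Lt X delta (bvec R s) =
  n%:R^-1 *: extend_mx sel_mx ((Xsub X s)^T *m Xsub X s) delta.
Proof.
rewrite /Lt Xt_bvec -sel_mul_trsel trmx_mul trmxK.
by rewrite /extend_mx !mulmxA -(mulmxA _ sel_mx^T) trsel_mul_sel mulmx1.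
Qed.

Lemma unitmx_Lt_bvec delta : (0 < n)%N -> delta != 0 ->
  (Lt X delta (bvec R s) \in unitmx) = ((Xsub X s)^T *m Xsub X s \in unitmx).
Proof.
move=> n_gt0 delta_neq0.
rewrite Lt_bvec unitmxZ ?unitmx_extend ?unitfE ?invr_eq0 ?pnatr_eq0 -?lt0n //.
exact: trsel_mul_sel.
Qed.

End Selection.

Lemma MP_inverse_invmx (R : realType) m (A : 'M[R]_m) :
  A \in unitmx -> is_MP_inverse A (invmx A).
Proof. by move=> Au; split; rewrite ?mulmxV ?mulVmx ?mul1mx ?mulmx1 ?trmx1. Qed.

Lemma mp_pinv_invmx (R : realType) m (A : 'M[R]_m) :
  A \in unitmx -> mp_pinv A = invmx A.
Proof.
move=> Au; have [AMA _ _ _] : is_MP_inverse A (mp_pinv A).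
  by apply: xgetPex; exists (invmx A); apply: MP_inverse_invmx.
rewrite -[LHS](mulKmx Au) -[LHS](mulmxK Au) -(mulmxA (invmx A)) AMA.
by rewrite mulVmx // mul1mx.
Qed.

Theorem theorem2 (R : realType) (n p : nat) (hn : (0 < n)%N) (hp : (0 < p)%N)
  (X : 'M[R]_(n, p)) (y : 'cV[R]_n) (delta : R) (hdelta : 0 < delta)
  (s : 'I_p -> bool) :
  (((Xsub X s)^T *m Xsub X s \in unitmx) <-> (Lt X delta (bvec R s) \in unitmx))
  /\ ((Xsub X s)^T *m Xsub X s \in unitmx ->
      Xsub X s *m beta_hat X y s
      = Xt X (bvec R s) *m beta_tilde X y delta (bvec R s)).
Proof.
have delta_neq0 : delta != 0 by rewrite gt_eqF.
have n_unit : (n%:R : R) \is a GRing.unit by rewrite unitfE pnatr_eq0 -lt0n.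
split; first by rewrite unitmx_Lt_bvec.
move=> Au; have Lu : Lt X delta (bvec R s) \in unitmx.
  by rewrite unitmx_Lt_bvec.
rewrite /beta_tilde mp_pinv_invmx // Lt_bvec invmxZ -?Lt_bvec ?unitrV //.
rewrite (invmx_extend (trsel_mul_sel R s)) ?unitfE // invrK Xt_bvec.
rewrite trmx_mul trmxK -scalemxAl -!scalemxAr scalerA mulrV // scale1r.
rewrite /beta_hat.
by rewrite -[in LHS](extend_mxK (trsel_mul_sel R s) (invmx _) delta^-1) !mulmxA.
Qed.
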